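(* Let $\mathsf X$ be a subcategory of the cluster tube $\mathsf C_n$ with corresponding $n$-periodic collection of arcs $\mathcal X$, and suppose $\mathsf X={}^{\perp}(\mathsf X^{\perp})$ (equivalently, $\mathcal X$ is an $n$-periodic Ptolemy diagram). Then exactly one of the following holds: (i) $\mathsf X$ has only finitely many indecomposable objects (up to isomorphism), all of level $\le n-1$, and $\mathsf X^{\perp}$ has infinitely many indecomposable objects; (ii) $\mathsf X$ has infinitely many indecomposable objects, and $\mathsf X^{\perp}$ has only finitely many indecomposable objects, all of level $\le n-1$.
   Context: Fix a field $K$ and an integer $n\ge 1$. The cluster tube $\mathsf C_n=D^b(\mathsf T_n)/(\tau^{-1}\circ\Sigma)$ is the cluster category of the tube category $\mathsf T_n$ of nilpotent finite-dimensional representations of the cyclically oriented cyclic quiver with $n$ vertices; it is a Krull–Schmidt, Hom-finite, 2-Calabi–Yau triangulated category with $\Sigma=\tau$. An arc of the $\infty$-gon is a pair $(i,j)$ of integers with $j-i\ge 2$; its length is $j-i$. Isoclasses of indecomposable objects of $\mathsf C_n$ correspond bijectively to classes $[(i,j)]=\{(i+rn,j+rn):r\in\mathbb Z\}$ of arcs, with $\Sigma[(i,j)]=\tau[(i,j)]=[(i-1,j-1)]$; the level of $[(i,j)]$ is $j-i-1$. Subcategories are full and closed under isomorphisms, finite direct sums and direct summands, and correspond to $n$-periodic collections of arcs (the arcs representing their indecomposables). $\mathsf X^{\perp}=\{c:\operatorname{Hom}(x,c)=0\ \forall x\in\mathsf X\}$, ${}^{\perp}\mathsf Y=\{c:\operatorname{Hom}(c,y)=0\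 \forall y\in\mathsf Y\}$. Two arcs $(i,j),(k,l)$ cross if $i<k<j<l$ or $k<i<l<j$. A Ptolemy diagram of the $\infty$-gon is a collection $\mathcal X$ of arcs such that whenever $(i,j),(r,s)\in\mathcal X$ cross with $i<r$, each of $(i,r),(i,s),(r,j),(j,s)$ which is an arc lies in $\mathcal X$. *)

(* arcs of the infinity-gon are pairs of integers. *)
From Stdlib Require Import ZArith List.
Open Scope Z_scope.

Definition arc : Type := (Z * Z)%type.

Definition is_arc (a : arc) : Prop := snd a - fst a >= 2.

Definition level (a : arc) : Z := snd a - fst a - 1.

Definition same_class (n : Z) (a b : arc) : Prop :=
  exists r : Z, fst b = fst a + r * n /\ snd b = snd a + r * n.

Definition cross (a b : arc) : Prop :=
  (fst a < fst b /\ fst b < snd a /\ snd a < snd b) \/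
  (fst b < fst a /\ fst a < snd b /\ snd b < snd a).

(* Ext^1_{C_n}([a],[b]) <> 0 : some representatives of the classes cross *)
Definition ext_nz (n : Z) (a b : arc) : Prop :=
  exists a' b', same_class n a a' /\ same_class n b b' /\ cross a' b'.

(* Hom_{C_n}([a],[c]) = Ext^1([a], Sigma^{-1}[c]) (2-Calabi-Yau),
   with Sigma^{-1}[(k,l)] = [(k+1,l+1)]. *)
Definition hom_nz (n : Z) (a c : arc) : Prop :=
  ext_nz n a (fst c + 1, snd c + 1).

(* A subcategory of C_n = an n-periodic collection of arcs *)
Definition subcat (n : Z) (X : arc -> Prop) : Prop :=
  (forall a, X a -> is_arc a) /\
  (forall a b, same_class n a b -> (X a <-> X b)).

(* X^perp and ^perp Y (on indecomposables) *)
Definition right_perp (n : Z) (X : arc -> Prop) (c : arc) : Prop :=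
  is_arc c /\ forall x, X x -> ~ hom_nz n x c.

Definition left_perp (n : Z) (Y : arc -> Prop) (c : arc) : Prop :=
  is_arc c /\ forall y, Y y -> ~ hom_nz n c y.

(* only finitely many indecomposables up to isomorphism, i.e. finitely many
   classes of arcs *)
Definition finitely_many_classes (n : Z) (X : arc -> Prop) : Prop :=
  exists L : list arc, forall a, X a -> exists b, In b L /\ same_class n b a.

(* Call an arc long if its level is at least n.  Two long arcs always have a
   nonzero Hom between them (shift one so that the two cross), so if X contains
   a long arc then X^perp consists of short arcs only, i.e. of finitely many
   classes; and since short arcs of X^perp cannot separate the endpoints of a
   long arc of X = ^perp(X^perp), stretching it by multiples of n keeps it in X,
   so X is infinite.

   If X has only short arcs but X^perp were finite, of bounded level, then every
   point of the oo-gon would lie under an arc of X (otherwise a very long arc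
   over that point would be in X^perp) and under an arc of X^perp (otherwise a
   long arc over it would be in X).  Alternating between the two, non-crossing
   forces each new arc of X to be longer than the previous one, contradicting
   the bound on X. *)

From Stdlib Require Import ZArith List Lia Classical.
Open Scope Z_scope.

Lemma exists_shift_into_window (n k x : Z) :
  1 <= n -> exists r, k - n < x + r * n <= k.
Proof.
  intros hn. exists ((k - x) / n).
  pose proof (Z.mod_pos_bound (k - x) n ltac:(lia)).
  pose proof (Z.div_mod (k - x) n ltac:(lia)). lia.
Qed.

Lemma same_class_sym n a b : same_class n a b -> same_class n b a.
Proof. intros [r [H1 H2]]. exists (- r). lia. Qed.

Lemma subcat_shift n X p j r : subcat n X -> X (p, j) -> X (p + r * n, j + r * n).
Proof. intros [_ hcl] Hx. apply (hcl (p, j)); [exists r; simpl; lia | exact Hx]. Qed.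

Lemma hom_nz_iff n a c : hom_nz n a c <->
  exists r1 r2,
    cross (fst a + r1 * n, snd a + r1 * n) (fst c + 1 + r2 * n, snd c + 1 + r2 * n).
Proof.
  unfold hom_nz, ext_nz, same_class. split.
  - intros [[a1 a2] [[b1 b2] [[r1 [H1 H2]] [[r2 [H3 H4]] Hc]]]]; simpl in *; subst.
    exists r1, r2. exact Hc.
  - intros [r1 [r2 Hc]]. do 2 eexists; split; [|split; [|exact Hc]].
    + exists r1; simpl; lia.
    + exists r2; simpl; lia.
Qed.

Lemma hom_nz_of_cross n a c : cross a (fst c + 1, snd c + 1) -> hom_nz n a c.
Proof.
  intros Hc. apply hom_nz_iff. exists 0, 0.
  destruct a, c. unfold cross in *. simpl in *. lia.
Qed.

Lemma hom_nz_same_class_r n x c c' :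
  same_class n c c' -> hom_nz n x c -> hom_nz n x c'.
Proof.
  intros [r [H1 H2]]. rewrite !hom_nz_iff. intros [r1 [r2 Hc]].
  exists r1, (r2 - r). rewrite H1, H2. unfold cross in *. simpl in *. lia.
Qed.

Lemma hom_nz_of_long n a c :
  1 <= n -> n <= level a -> n <= level c -> hom_nz n a c.
Proof.
  intros hn Ha Hc. apply hom_nz_iff.
  destruct a as [p j], c as [k l]. unfold level, cross in *. simpl in *.
  destruct (Z_le_gt_dec (j - p) (l - k)).
  - destruct (exists_shift_into_window n k p hn) as [r Hr]. exists r, 0. lia.
  - destruct (exists_shift_into_window n l p hn) as [r Hr]. exists r, 0. lia.
Qed.

Lemma right_perp_same_class n X a b :
  same_class n a b -> right_perp n X a -> right_perp n X b.
Proof.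
  intros Hab [Harc Hno]. split.
  - destruct Hab as [r [H1 H2]]. unfold is_arc in *. lia.
  - intros x Hx Hh. apply (Hno x Hx).
    exact (hom_nz_same_class_r n x b a (same_class_sym n a b Hab) Hh).
Qed.

Lemma subcat_right_perp n X : subcat n (right_perp n X).
Proof.
  split; [now intros a []|].
  intros a b Hab. split; apply right_perp_same_class; [exact Hab | now apply same_class_sym].
Qed.

Lemma level_bound_of_finitely_many_classes n P :
  finitely_many_classes n P -> exists B, forall a, P a -> level a <= B.
Proof.
  intros [L HL]. exists (fold_right (fun b B => Z.max (level b) B) 0 L).
  intros a Ha. destruct (HL a Ha) as [b [Hb [r [H1 H2]]]].
  assert (Hmax : level b <= fold_right (fun b B => Z.max (level b) B) 0 L).
  { clear - Hb. induction L as [|b0 L IH]; simpl in *; [tauto|].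
    destruct Hb as [<-|Hb]; [|specialize (IH Hb)]; lia. }
  unfold level in *. lia.
Qed.

Lemma not_finitely_many_classes_of_unbounded n P :
  (forall B, exists a, P a /\ B < level a) -> ~ finitely_many_classes n P.
Proof.
  intros Hunb Hfin. destruct (level_bound_of_finitely_many_classes n P Hfin) as [B HB].
  destruct (Hunb B) as [a [Ha Hlt]]. specialize (HB a Ha). lia.
Qed.

(* A class of level at most n - 1 has a representative (i, j) with 0 <= i < n
   and 2 <= j - i <= n. *)
Lemma finitely_many_classes_of_level_le n P : 1 <= n ->
  (forall a, P a -> is_arc a) -> (forall a, P a -> level a <= n - 1) ->
  finitely_many_classes n P.
Proof.
  intros hn Harc Hlev.
  exists (flat_map (fun i => map (fun d => (Z.of_nat i, Z.of_nat i + Z.of_nat d))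
            (seq 0 (Z.to_nat n + 1))) (seq 0 (Z.to_nat n))).
  intros [i j] Ha. specialize (Harc _ Ha). specialize (Hlev _ Ha).
  unfold is_arc, level in *. simpl in *.
  pose proof (Z.mod_pos_bound i n ltac:(lia)).
  pose proof (Z.div_mod i n ltac:(lia)).
  exists (i mod n, i mod n + (j - i)). split.
  - apply in_flat_map. exists (Z.to_nat (i mod n)). split.
    + apply in_seq. lia.
    + apply in_map_iff. exists (Z.to_nat (j - i)). split.
      * rewrite !Z2Nat.id by lia. reflexivity.
      * apply in_seq. lia.
  - exists (i / n). simpl. lia.
Qed.

Lemma right_perp_level_le_of_long n X a c : 1 <= n ->
  X a -> n <= level a -> right_perp n X c -> level c <= n - 1.
Proof.
  intros hn Ha Hla [_ Hno]. apply Z.lt_le_pred. apply Z.nle_gt. intros Hlc.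
  exact (Hno a Ha (hom_nz_of_long n a c hn Hla Hlc)).
Qed.

Lemma left_perp_stretch n Y p j k : 1 <= n -> 0 <= k -> n <= level (p, j) ->
  (forall y, Y y -> level y <= n - 1) ->
  left_perp n Y (p, j) -> left_perp n Y (p, j + k * n).
Proof.
  intros hn hk Hlen HY [Harc Hno]. split.
  - unfold is_arc, level in *. simpl in *. nia.
  - intros y Hy Hh. apply (Hno y Hy). specialize (HY y Hy).
    rewrite hom_nz_iff in *. destruct Hh as [r1 [r2 Hc]].
    unfold cross, level in *. simpl in *.
    destruct Hc as [Hc|Hc]; [exists (r1 + k), r2 | exists r1, r2]; nia.
Qed.

Lemma not_finitely_many_classes_of_long n X a : 1 <= n ->
  (forall c, X c <-> left_perp n (right_perp n X) c) ->
  X a -> n <= level a -> ~ finitely_many_classes n X.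
Proof.
  intros hn hperp Ha Hla. apply not_finitely_many_classes_of_unbounded. intros B.
  destruct a as [p j]. exists (p, j + Z.abs B * n). split.
  - apply hperp, left_perp_stretch; try lia.
    + intros y Hy. exact (right_perp_level_le_of_long n X (p, j) y hn Ha Hla Hy).
    + now apply hperp.
  - unfold level in *. simpl in *. nia.
Qed.

Lemma right_perp_of_uncovered n X q m : 1 <= n -> 2 <= m -> subcat n X ->
  (forall x, X x -> ~ (fst x <= q <= snd x - 2)) -> right_perp n X (q, q + m * n).
Proof.
  intros hn hm hX Hunc. split; [unfold is_arc; simpl; nia|].
  intros [p j] Hx Hh. rewrite hom_nz_iff in Hh. destruct Hh as [r1 [r2 Hc]].
  unfold cross in Hc. simpl in Hc. destruct Hc as [Hc|Hc].
  - apply (Hunc _ (subcat_shift n X p j (r1 - r2) hX Hx)). simpl. lia.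
  - apply (Hunc _ (subcat_shift n X p j (r1 - r2 - m) hX Hx)). simpl. lia.
Qed.

Lemma left_perp_of_uncovered n Y q m : 1 <= n -> 2 <= m -> subcat n Y ->
  (forall y, Y y -> ~ (fst y + 2 <= q <= snd y)) -> left_perp n Y (q, q + m * n).
Proof.
  intros hn hm hY Hunc. split; [unfold is_arc; simpl; nia|].
  intros [s l] Hy Hh. rewrite hom_nz_iff in Hh. destruct Hh as [r1 [r2 Hc]].
  unfold cross in Hc. simpl in Hc. destruct Hc as [Hc|Hc].
  - apply (Hunc _ (subcat_shift n Y s l (r2 - r1 - m) hY Hy)). simpl. lia.
  - apply (Hunc _ (subcat_shift n Y s l (r2 - r1) hY Hy)). simpl. lia.
Qed.

Section Covered.

Variables (n : Z) (X : arc -> Prop).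
Hypothesis cover_X : forall q, exists x, X x /\ fst x <= q <= snd x - 2.
Hypothesis cover_perp : forall q, exists y, right_perp n X y /\ fst y + 2 <= q <= snd y.

(* With y = (s, l) in X^perp over the endpoint j of x = (p, j), and x' = (p', j')
   in X over l, the absence of Hom from x and x' to y forces p' <= s + 1 <= p. *)
Lemma exists_longer_arc x : X x -> exists x', X x' /\ level x < level x'.
Proof.
  intros Hx. destruct x as [p j].
  destruct (cover_perp j) as [[s l] [[_ Hno] Hy]]. simpl in Hy.
  destruct (cover_X l) as [[p' j'] [Hx' Hx'l]]. simpl in Hx'l.
  assert (Hp : s + 1 <= p).
  { apply Z.nlt_ge. intros Hlt. apply (Hno _ Hx), hom_nz_of_cross.
    unfold cross. simpl. lia. }
  assert (Hp' : p' <= s + 1).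
  { apply Z.nlt_ge. intros Hlt. apply (Hno _ Hx'), hom_nz_of_cross.
    unfold cross. simpl. lia. }
  exists (p', j'). split; [exact Hx'|]. unfold level. simpl. lia.
Qed.

Lemma covered_unbounded k : exists x, X x /\ k < level x.
Proof.
  assert (Hnat : forall m : nat, exists x, X x /\ Z.of_nat m <= level x).
  { induction m as [|m [x [Hx Hlx]]].
    - destruct (cover_X 0) as [x [Hx Hq]]. exists x. split; [exact Hx|]. unfold level. lia.
    - destruct (exists_longer_arc x Hx) as [x' [Hx' Hlt]]. exists x'. split; [exact Hx'|]. lia. }
  destruct (Hnat (Z.to_nat (k + 1))) as [x [Hx Hlx]]. exists x. split; [exact Hx|]. lia.
Qed.

End Covered.

Lemma right_perp_not_finite_of_short n X : 1 <= n -> subcat n X ->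
  (forall c, X c <-> left_perp n (right_perp n X) c) ->
  (forall a, X a -> level a <= n - 1) -> ~ finitely_many_classes n (right_perp n X).
Proof.
  intros hn hX hperp Hshort Hfin.
  destruct (level_bound_of_finitely_many_classes _ _ Hfin) as [B HB].
  assert (cover_X : forall q, exists x, X x /\ fst x <= q <= snd x - 2).
  { intros q. apply NNPP. intros Hne.
    assert (Hy : right_perp n X (q, q + (Z.abs B + 2) * n)).
    { apply right_perp_of_uncovered; [lia | lia | exact hX|].
      intros x Hx Hq. apply Hne. now exists x. }
    specialize (HB _ Hy). unfold level in HB. simpl in HB. nia. }
  assert (cover_perp : forall q, exists y, right_perp n X y /\ fst y + 2 <= q <= snd y).
  { intros q. apply NNPP. intros Hne.
    assert (Hx : X (q, q + 2 * n)).
    { apply hperp, left_perp_of_uncovered; [lia | lia | apply subcat_right_perp|].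
      intros y Hy Hq. apply Hne. now exists y. }
    specialize (Hshort _ Hx). unfold level in Hshort. cbn [fst snd] in Hshort. lia. }
  destruct (covered_unbounded n X cover_X cover_perp n) as [x [Hx Hlx]].
  specialize (Hshort x Hx). lia.
Qed.

Theorem mainTheorem4 (n : Z) (hn : 1 <= n) (X : arc -> Prop)
  (hX : subcat n X)
  (hperp : forall c, X c <-> left_perp n (right_perp n X) c) :
  let case_i :=
    finitely_many_classes n X /\ (forall a, X a -> level a <= n - 1) /\
    ~ finitely_many_classes n (right_perp n X) in
  let case_ii :=
    ~ finitely_many_classes n X /\ finitely_many_classes n (right_perp n X) /\
    (forall a, right_perp n X a -> level a <= n - 1) in
  (case_i /\ ~ case_ii) \/ (case_ii /\ ~ case_i).
Proof.
  intros case_i case_ii.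
  destruct (classic (exists a, X a /\ n <= level a)) as [[a [Ha Hla]] | Hno_long].
  - assert (HXinf := not_finitely_many_classes_of_long n X a hn hperp Ha Hla).
    assert (Hperp_short : forall c, right_perp n X c -> level c <= n - 1)
      by (intros c; exact (right_perp_level_le_of_long n X a c hn Ha Hla)).
    right. split; [split; [|split]|intros [HXfin _]]; auto.
    apply finitely_many_classes_of_level_le; auto. now intros c [].
  - assert (HX_short : forall a, X a -> level a <= n - 1).
    { intros a Ha. apply Z.lt_le_pred, Z.nle_gt. intros Hla. apply Hno_long. now exists a. }
    assert (HXfin : finitely_many_classes n X)
      by (apply finitely_many_classes_of_level_le; [exact hn | apply hX | exact HX_short]).
    left. split; [split; [|split]|intros [HXinf _]]; auto.
    now apply right_perp_not_finite_of_short.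
Qed.
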